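(* Let $(V,\{A,B\})$ be a forking problem with $n$ agents and a monotonic profile. Suppose there exist $k_1,k_2\in\{1,\dots,n\}$ with $k_1\le|V_A^*|$ and $k_2\le|V_B^*|$ such that every agent in $V_A^*$ is $k_1$-loyal (to $A$) and every agent in $V_B^*$ is $k_2$-loyal (to $B$). Then the profile admits a unique stable assignment.
   Context: Agents $V=\{v_1,\dots,v_n\}$; two alternatives $A,B$. Each agent $v_i$ has a strict total order $\succ_i$ on $\{A,B\}\times\{1,\dots,n\}$, where $(S,j)$ means being in the community adopting $S$ of size $j$; it is monotonic if $(S,j)\succ_i(S,k)$ whenever $k<j$. For $S\in\{A,B\}$ with $S'$ the other alternative, $V_S^*$ is the set of agents with $(S,n)\succ_i(S',n)$. Agent $v_i$ is $k$-loyal to $S$ if $v_i\in V_S^*$ and $(S,k)\succ_i(S',n)$. An assignment is a map $f:V\to\{A,B\}$; $v_i$ prefers $f$ to $g$ if $(f(v_i),|f^{-1}(f(v_i))|)\succ_i(g(v_i),|g^{-1}(g(v_i))|)$. An assignment $f$ is stable if there is no assignment $f'\neq f$ such that every agent $v_i$ with $f'(v_i)\neq f(v_i)$ prefers $f'$ to $f$. *)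

From mathcomp Require Import all_boot.
Set Implicit Arguments. Unset Strict Implicit. Unset Printing Implicit Defensive.

Definition alt := bool.
Definition altA : alt := true.
Definition altB : alt := false.
Definition other (S : alt) : alt := ~~ S.

(* An outcome (S, j): being in the community adopting S, of size j. *)
Definition outcome := (alt * nat)%type.
Definition in_dom (n : nat) (x : outcome) : bool := (1 <= x.2 <= n).

(* r x y means x is strictly preferred to y; r is a strict total order on
   {A,B} x {1..n}. *)
Definition strict_total_order_on (n : nat) (r : rel outcome) : Prop :=
  [/\ (forall x, in_dom n x -> ~~ r x x),
      (forall x y z, in_dom n x -> in_dom n y -> in_dom n z ->
          r x y -> r y z -> r x z) &
      (forall x y, in_dom n x -> in_dom n y -> x <> y -> r x y \/ r y x)].

Definition profile (n : nat) := 'I_n -> rel outcome.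

Definition is_profile (n : nat) (P : profile n) : Prop :=
  forall i, strict_total_order_on n (P i).

Definition monotonic (n : nat) (P : profile n) : Prop :=
  forall i (S : alt) (j k : nat), 1 <= k -> k < j -> j <= n ->
    P i (S, j) (S, k).

Definition Vstar (n : nat) (P : profile n) (S : alt) : {set 'I_n} :=
  [set i | P i (S, n) (other S, n)].

Definition loyal (n : nat) (P : profile n) (k : nat) (i : 'I_n) (S : alt) : Prop :=
  i \in Vstar P S /\ P i (S, k) (other S, n).

Definition assignment (n : nat) := {ffun 'I_n -> alt}.

Definition comm_size (n : nat) (f : assignment n) (i : 'I_n) : nat :=
  #|[set j | f j == f i]|.

Definition prefers (n : nat) (P : profile n) (i : 'I_n) (f g : assignment n) : Prop :=
  P i (f i, comm_size f i) (g i, comm_size g i).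

Definition stable (n : nat) (P : profile n) (f : assignment n) : Prop :=
  ~ exists f' : assignment n, f' <> f /\
      (forall i, f' i <> f i -> prefers P i f' f).

(* Send V_A^* to A and everybody else (who is then in V_B^* ) to B.  An agent
   of V_S^* that is k-loyal with k <= |V_S^*| ranks (S, |V_S^*|) above every
   outcome (S', j): by monotonicity (S, |V_S^*|) >= (S, k) > (S', n) >= (S', j).
   Hence under this assignment every agent is strictly worse off after any
   switch, so no deviation exists, and conversely it is itself a profitable
   deviation from any other assignment. *)
From mathcomp Require Import all_boot.

Set Implicit Arguments.
Unset Strict Implicit.
Unset Printing Implicit Defensive.

Lemma comm_size_in_dom n (f : assignment n) i : in_dom n (f i, comm_size f i).
Proof.
rewrite /in_dom /comm_size /= card_gt0; apply/andP; split.
  by apply/set0Pn; exists i; rewrite inE.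
by rewrite -[X in _ <= X]card_ord max_card.
Qed.

Lemma card_Vstar_le n (P : profile n) S : #|Vstar P S| <= n.
Proof. by rewrite -[X in _ <= X]card_ord max_card. Qed.

Section ForkingProblem.

Variables (n : nat) (P : profile n).
Hypotheses (P_order : is_profile P) (P_mono : monotonic P).

Lemma pref_asym i x y : in_dom n x -> in_dom n y -> P i x y -> ~~ P i y x.
Proof.
move=> dx dy xy; apply/negP => yx; have [irr trans _] := P_order i.
by have := irr x dx; rewrite (trans x y x).
Qed.

Lemma Vstar_other (i : 'I_n) S :
  (i \in Vstar P (other S)) = (i \notin Vstar P S).
Proof.
have dn T : in_dom n (T, n).
  by rewrite /in_dom /= leqnn (leq_trans _ (ltn_ord i)).
have [_ _ total] := P_order i.
rewrite !inE /other negbK.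
have neq : (~~ S, n) <> (S, n) by case: S.
case: (boolP (P i (S, n) (~~ S, n))) => [pref | not_pref].
  by rewrite (negbTE (pref_asym (dn _) (dn _) pref)).
by case: (total _ _ (dn _) (dn _) neq) => // pref; rewrite pref in not_pref.
Qed.

Lemma pref_monoL i S k j y : 1 <= k <= j -> j <= n -> in_dom n y ->
  P i (S, k) y -> P i (S, j) y.
Proof.
move=> /andP[k_gt0 le_kj] le_jn dy pref_k; have [_ trans _] := P_order i.
have dj : in_dom n (S, j) by rewrite /in_dom /= le_jn (leq_trans k_gt0).
have dk : in_dom n (S, k) by rewrite /in_dom /= k_gt0 (leq_trans le_kj).
case: (ltngtP k j) le_kj => // [lt_kj _|<- _ //].
exact: trans dj dk dy (P_mono _ _ k_gt0 lt_kj le_jn) pref_k.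
Qed.

Lemma pref_monoR i x S k j : 1 <= j <= k -> k <= n -> in_dom n x ->
  P i x (S, k) -> P i x (S, j).
Proof.
move=> /andP[j_gt0 le_jk] le_kn dx pref_k; have [_ trans _] := P_order i.
have dj : in_dom n (S, j) by rewrite /in_dom /= j_gt0 (leq_trans le_jk).
have dk : in_dom n (S, k) by rewrite /in_dom /= le_kn (leq_trans j_gt0).
case: (ltngtP j k) le_jk => // [lt_jk _|-> _ //].
exact: trans dx dk dj pref_k (P_mono _ _ j_gt0 lt_jk le_kn).
Qed.

Lemma loyal_pref i S k j : 1 <= k <= #|Vstar P S| -> loyal P k i S ->
  1 <= j <= n -> P i (S, #|Vstar P S|) (other S, j).
Proof.
move=> k_range [_ loyal_k] j_range.
have le_Vn := card_Vstar_le P S.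
have le_kn : k <= n by case/andP: k_range => _ /leq_trans; apply.
have dk : in_dom n (S, k) by rewrite /in_dom /= le_kn andbT; case/andP: k_range.
have dj : in_dom n (other S, j) by [].
exact: pref_monoL k_range le_Vn dj (pref_monoR j_range (leqnn n) dk loyal_k).
Qed.

Definition dominant (f : assignment n) :=
  forall (g : assignment n) i, g i <> f i -> prefers P i f g.

Lemma dominant_stable f : dominant f -> stable P f.
Proof.
move=> f_dom [g [g_neq_f g_dev]].
have /forallPn[i /eqP neq_i] : ~~ [forall i, g i == f i].
  by apply/forallP => eq_gf; apply: g_neq_f; apply/ffunP => i; apply/eqP.
by have := pref_asym (comm_size_in_dom f i) (comm_size_in_dom g i)
  (f_dom g i neq_i); rewrite (g_dev i neq_i).
Qed.

Lemma dominant_unique_stable f g : dominant f -> stable P g -> g = f.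
Proof.
move=> f_dom g_stable; apply/ffunP => i; apply/eqP/negPn/negP => /eqP neq_i.
apply: g_stable; exists f; split; first by move=> eq_fg; rewrite eq_fg in neq_i.
by move=> j neq_j; apply: f_dom => eq_j; rewrite eq_j in neq_j.
Qed.

Definition Vstar_assignment : assignment n := [ffun i => i \in Vstar P altA].

Lemma Vstar_assignmentE i S : (Vstar_assignment i == S) = (i \in Vstar P S).
Proof.
rewrite ffunE; case: S; first by case: (i \in _).
by rewrite -[Vstar P false]/(Vstar P (other altA)) Vstar_other; case: (i \in _).
Qed.

Lemma comm_size_Vstar_assignment i :
  comm_size Vstar_assignment i = #|Vstar P (Vstar_assignment i)|.
Proof. by apply: eq_card => j; rewrite inE Vstar_assignmentE. Qed.

Lemma Vstar_assignment_dominant :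
  (forall S i, i \in Vstar P S ->
     exists2 k, 1 <= k <= #|Vstar P S| & loyal P k i S) ->
  dominant Vstar_assignment.
Proof.
move=> all_loyal g i neq_i; rewrite /prefers comm_size_Vstar_assignment.
have -> : g i = other (Vstar_assignment i).
  by case: (g i) (Vstar_assignment i) neq_i => [] [].
set S := Vstar_assignment i.
have iS : i \in Vstar P S by rewrite -Vstar_assignmentE.
have [k k_range loyal_k] := all_loyal S i iS.
exact: loyal_pref k_range loyal_k (comm_size_in_dom g i).
Qed.

End ForkingProblem.

Theorem proposition1 (n : nat) (P : profile n) :
  is_profile P -> monotonic P ->
  (exists k1 k2 : nat,
     [/\ 1 <= k1 <= n, 1 <= k2 <= n,
         k1 <= #|Vstar P altA| & k2 <= #|Vstar P altB|] /\
     (forall i, i \in Vstar P altA -> loyal P k1 i altA) /\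
     (forall i, i \in Vstar P altB -> loyal P k2 i altB)) ->
  exists! f : assignment n, stable P f.
Proof.
move=> P_order P_mono [k1 [k2 [[/andP[k1_gt0 _] /andP[k2_gt0 _] k1_le k2_le]
  [loyalA loyalB]]]].
have all_loyal S i : i \in Vstar P S ->
    exists2 k, 1 <= k <= #|Vstar P S| & loyal P k i S.
  by case: S => iS; [exists k1; rewrite ?k1_gt0 //; apply: loyalA
                    | exists k2; rewrite ?k2_gt0 //; apply: loyalB].
have f_dom := Vstar_assignment_dominant P_order P_mono all_loyal.
exists (Vstar_assignment P); split; first exact: dominant_stable f_dom.
by move=> g /(dominant_unique_stable f_dom).
Qed.
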